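(* Let $\pi=(d_1,\ldots,d_n)$ be a full sequence with $n$ elements, all of whose elements lie in $\{1,\ldots,d_{\max}\}$ (i.e. $\pi=(d_{\max},\ldots,d_{\max},d_{\max}-1,\ldots,d_{\max}-1,\ldots,1,\ldots,1)$), where $d_{\max}$ is its largest element and $d_{\max}\leq n/2$. Then $\pi$ is graphic.
   Context: All graphs are finite, without loops or multiple edges. A sequence $\pi=(d_1,\ldots,d_n)$ of nonnegative integers is called graphic if there exists a graph with $n$ vertices whose vertex degrees are $d_1,\ldots,d_n$; such a graph is called a realization of $\pi$. A sequence $\pi$ with largest element $d_{\max}$ is called a full sequence if every integer $d$ with $1\leq d\leq d_{\max}$ is an element of $\pi$, and the sum of the elements of $\pi$ is even. *)

From mathcomp Require Import all_boot.
Set Implicit Arguments. Unset Strict Implicit. Unset Printing Implicit Defensive.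

Definition simple_graph n (e : rel 'I_n) : Prop :=
  irreflexive e /\ symmetric e.

Definition deg n (e : rel 'I_n) (v : 'I_n) : nat := #|[set w | e v w]|.

Definition graphic (d : seq nat) : Prop :=
  exists e : rel 'I_(size d),
    simple_graph e /\ forall v : 'I_(size d), deg e v = nth 0 d v.

Definition dmax (d : seq nat) : nat := \max_(x <- d) x.

Definition full_seq (d : seq nat) : Prop :=
  (forall k, 1 <= k <= dmax d -> k \in d) /\ ~~ odd (sumn d).

From mathcomp Require Import all_boot perm zify.
Set Implicit Arguments. Unset Strict Implicit. Unset Printing Implicit Defensive.

(* Havel-Hakimi induction on the length n.  Call d full up to D when its
   values are exactly 1, ..., D; we show that every such d of even sum with
   2 D <= n + 1 is graphic.  Laying off a vertex of degree k onto k others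
   (joining it to them and decrementing their degrees) can always be done so
   that the residual sequence, zeros removed, is again of this kind:
   - if D is repeated, lay a D-vertex off onto the other D-vertices and then
     onto the largest values below D;
   - if D occurs once but 1 is repeated, lay a 1-vertex off onto the D-vertex;
   - if D occurs once and some 1 < x0 < D is repeated, lay the D-vertex off
     onto 1, 2, ..., D - 1 and x0.
   If no value is repeated then n <= D, so D = 1 and d = [:: 1] has odd sum. *)

Lemma graphic_bij n (T : finType) (e : rel T) (h : T -> 'I_n) (d : seq nat) :
  size d = n -> bijective h -> irreflexive e -> symmetric e ->
  (forall v, #|[set w | e v w]| = nth 0 d (h v)) -> graphic d.
Proof.
move=> size_d [g hK gK] e_irr e_sym deg_e; subst n.
exists (fun i j => e (g i) (g j)); split.
  by split=> [i|i j]; [apply: e_irr | apply: e_sym].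
move=> v; rewrite /deg -[in RHS](gK v) -deg_e -(card_imset _ (can_inj hK)).
apply: eq_card => w; rewrite inE; apply/idP/imsetP => [e_vw | [u u_v ->]].
  by exists (g w); rewrite ?inE ?gK.
by rewrite hK -inE.
Qed.

Lemma graphic_nil : graphic [::].
Proof. by exists (fun _ _ => false); split=> [|[]]. Qed.

Lemma graphic_perm d d' : perm_eq d' d -> graphic d -> graphic d'.
Proof.
move=> dd' [e [[e_irr e_sym] deg_e]].
have /tuple_permP [p d'E] : perm_eq d' (in_tuple d) := dd'.
apply: (@graphic_bij _ _ e (fun v => p^-1 v)%g); rewrite ?d'E ?size_tuple //.
  by exists (fun v => p v) => v; rewrite ?permK ?permKV.
move=> v; rewrite -/(deg e v) deg_e -tnth_nth tnth_mktuple permKV.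
by rewrite (tnth_nth 0).
Qed.

Lemma card_option_set (T : finType) (P : pred (option T)) :
  #|[set w | P w]| = P None + #|[set j | P (Some j)]|.
Proof.
have Some_inj : injective (@Some T) by move=> ? ? [].
rewrite (cardsD1 None) inE -(card_imset _ Some_inj); congr (_ + _).
apply: eq_card; case=> [j|].
  by rewrite (mem_imset _ _ Some_inj) !inE.
by rewrite !inE /=; apply/esym/imsetP; case.
Qed.

Lemma card_ord_lt m k : k <= m -> #|[set j : 'I_m | j < k]| = k.
Proof.
move=> le_km; have widen_inj : injective (widen_ord le_km).
  by move=> i j /(congr1 val) => /= /val_inj.
rewrite -[RHS]card_ord -(card_imset _ widen_inj).
apply: eq_card => j; rewrite inE; apply/idP/imsetP => [lt_jk | [i _ ->]].
  by exists (Ordinal lt_jk); last by apply: val_inj.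
by rewrite /= ltn_ord.
Qed.

Lemma nth_cat_predn s r i : all (fun x => 0 < x) s ->
  nth 0 (s ++ r) i = (i < size s) + nth 0 (map predn s ++ r) i.
Proof.
move=> s_pos; rewrite !nth_cat size_map; case: ltnP => // lt_is.
by rewrite (nth_map 0) // add1n prednK // (allP s_pos) ?mem_nth.
Qed.

Lemma graphic_layoff s r : all (fun x => 0 < x) s ->
  graphic (map predn s ++ r) -> graphic (size s :: s ++ r).
Proof.
set m := size (map predn s ++ r) => s_pos [e [[e_irr e_sym] deg_e]].
pose e' (a b : option 'I_m) := match a, b with
  | Some i, Some j => e i j
  | Some i, None | None, Some i => i < size s
  | None, None => false end.
pose h (a : option 'I_m) : 'I_m.+1 := if a is Some i then lift ord0 i else ord0.
apply: (@graphic_bij _ _ e' h).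
- by rewrite /= /m !size_cat size_map.
- exists (fun j => unlift ord0 j); first by case=> [i|]; rewrite /= ?liftK ?unlift_none.
  by move=> j; case: unliftP => [i|] ->.
- by case=> [i|] //=; apply: e_irr.
- by case=> [i|] [j|] //=; apply: e_sym.
case=> [i|]; rewrite card_option_set /=.
  by rewrite add0n nth_cat_predn // -/(deg e i) deg_e.
by rewrite card_ord_lt // /m size_cat size_map leq_addr.
Qed.

Lemma graphic_zeros z r : all (pred1 0) z -> graphic r -> graphic (z ++ r).
Proof.
elim: z => //= x z IH /andP [/eqP -> /IH z_r] /z_r.
exact: (@graphic_layoff [::]).
Qed.

Lemma graphic_filter_pos d : graphic [seq x <- d | 0 < x] -> graphic d.
Proof.
pose pos x := 0 < x.
move=> /(graphic_zeros (z := filter (predC pos) d)) d_zeros.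
apply: (graphic_perm _ (d_zeros _)); first by rewrite perm_sym perm_catC perm_filterC.
by apply/allP => x; rewrite mem_filter /= -eqn0Ngt => /andP [].
Qed.

Lemma count_mem_gt0 (T : eqType) (x : T) s : (0 < count_mem x s) = (x \in s).
Proof. by rewrite -has_count has_pred1. Qed.

Lemma perm_cat_rest (T : eqType) (s d : seq T) :
  (forall x, count_mem x s <= count_mem x d) -> exists r, perm_eq d (s ++ r).
Proof.
move=> /count_subseqP [t /perm_to_subseq [r d_tr] s_t].
by exists r; rewrite (perm_trans d_tr) // perm_cat2r perm_sym.
Qed.

Section Predn.

Variable s : seq nat.
Hypothesis s_pos : all (fun x => 0 < x) s.

Lemma count_map_predn x : count_mem x (map predn s) = count_mem x.+1 s.
Proof.
rewrite count_map; apply: eq_in_count => y /(allP s_pos) y_pos /=.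
by rewrite -eqSS prednK.
Qed.

Lemma sumn_map_predn : sumn (map predn s) + size s = sumn s.
Proof.
by elim: s s_pos => //= x t IH /andP [x_pos /IH <-]; lia.
Qed.

End Predn.

Lemma sumn_filter_pos d : sumn [seq x <- d | 0 < x] = sumn d.
Proof. by elim: d => [|[|x] d IH] //=; rewrite IH. Qed.

Lemma graphic_layoff_sub (d s : seq nat) k :
  0 \notin d -> size s = k -> (forall x, count_mem x (k :: s) <= count_mem x d) ->
  exists e, [/\ graphic e -> graphic d,
    forall x, (x \in e) =
      (0 < x) && ((x.+1 \in s) || (count_mem x (k :: s) < count_mem x d)),
    size e + (count_mem 1 s).+1 = size d
    & odd (sumn e) = odd (sumn d)].
Proof.
move=> /count_memPn d0 <- {k} /perm_cat_rest [r d_r].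
have count_d (x : nat) : count_mem x d = count_mem x (size s :: s) + count_mem x r.
  by move/seq.permP: d_r => ->; rewrite count_cat.
have s_pos : all (fun x => 0 < x) s.
  apply/allP => -[|//]; rewrite -count_mem_gt0.
  by have := count_d 0; rewrite d0 /=; lia.
have r0 : count_mem 0 r = 0 by have := count_d 0; rewrite d0; lia.
pose e := [seq x <- map predn s ++ r | 0 < x].
exists e; split.
- by move=> /graphic_filter_pos /(graphic_layoff s_pos); apply: graphic_perm.
- move=> x; rewrite mem_filter mem_cat -!count_mem_gt0 count_map_predn // count_d.
  by lia.
- have := count_predC (fun x => 0 < x) (map predn s ++ r).
  rewrite -size_filter -/e (perm_size d_r) /= !size_cat size_map.
  have -> : count (predC (fun x => 0 < x)) (map predn s ++ r) =
            count_mem 0 (map predn s ++ r).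
    by apply: eq_count => x /=; rewrite -eqn0Ngt.
  by rewrite count_cat count_map_predn // r0 addn0 => <-; rewrite addnS.
- have -> : sumn d = sumn e + (size s).*2.
    by rewrite (perm_sumn d_r) /= sumn_filter_pos !sumn_cat -(sumn_map_predn s_pos); lia.
  by rewrite oddD odd_double addbF.
Qed.

Definition full_upto D (d : seq nat) := forall x : nat, (x \in d) = (0 < x <= D).

(* [count_mem x s] elaborates with either [nat] or [Equality.sort nat] as its
   type argument, which [lia] takes for distinct atoms; this alias fixes one. *)
Definition multiplicity (s : seq nat) (x : nat) : nat := count_mem x s.

(* Laying a vertex of degree [k] off onto vertices of degrees [s] leaves a
   sequence full up to [D'] that obeys the size bound of [graphic_full_upto]. *)
Definition admissible_layoff (d : seq nat) k s D' := [/\ size s = k,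
  forall x, multiplicity (k :: s) x <= multiplicity d x,
  forall x, (0 < x) && ((x.+1 \in s) || (multiplicity (k :: s) x < multiplicity d x))
            = (0 < x <= D')
  & D'.*2 + multiplicity s 1 <= size d].

Section AdmissibleLayoffs.

Variables (d : seq nat) (D : nat).
Hypotheses (d_full : full_upto D d) (d_size : D.*2 <= (size d).+1).

Lemma multiplicity_gt0 x : (0 < multiplicity d x) = (0 < x <= D).
Proof. by rewrite count_mem_gt0 d_full. Qed.

Lemma size_full : multiplicity d D + D.-1 <= size d.
Proof.
rewrite -(count_predC (pred1 D) d) leq_add2l -size_filter -[D.-1](size_iota 1).
apply: uniq_leq_size (iota_uniq _ _) _ => x.
rewrite mem_iota mem_filter d_full /=; lia.
Qed.

Lemma admissible_layoff_top (j := minn (multiplicity d D).-1 D) :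
  1 < multiplicity d D -> exists D', admissible_layoff d D (nseq j D ++ iota j (D - j)) D'.
Proof.
move=> top_dup; have := multiplicity_gt0 D; rewrite (ltnW top_dup) => /esym D_pos.
have j_def : j = minn (multiplicity d D).-1 D by [].
have j_le : j <= D by rewrite geq_minr.
have mult_s x : multiplicity (nseq j D ++ iota j (D - j)) x = (D == x) * j + (j <= x < D).
  rewrite /multiplicity count_cat count_nseq count_uniq_mem ?iota_uniq //.
  by rewrite mem_iota subnKC.
have mem_s x : (x \in nseq j D ++ iota j (D - j)) = (0 < j) && (x == D) || (j <= x < D).
  by rewrite mem_cat mem_nseq mem_iota subnKC.
exists (if D.+1 < multiplicity d D then D else D.-1); split.
- by rewrite size_cat size_nseq size_iota subnKC.
- move=> x; rewrite [multiplicity _ x]/= mult_s; case: (eqVneq x D) => [->|xD]; first lia.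
  by have := multiplicity_gt0 x; lia.
- move=> x; rewrite [multiplicity _ x]/= mult_s mem_s; case: (eqVneq x D) => [->|xD].
    by case: ifP; lia.
  by have := multiplicity_gt0 x; case: ifP; lia.
- by rewrite mult_s; have := size_full; case: ifP; lia.
Qed.

Lemma admissible_layoff_leaf :
  multiplicity d D = 1 -> 1 < multiplicity d 1 -> admissible_layoff d 1 [:: D] D.-1.
Proof.
move=> top1 dup1; have D_gt1 : 1 < D.
  case: (eqVneq D 1) => [D1 | D_n1]; first by move: top1 dup1; rewrite D1 => ->.
  by have := multiplicity_gt0 D; rewrite top1; lia.
split=> // [x | x |]; last by rewrite /multiplicity /=; lia.
all: have := multiplicity_gt0 x; rewrite [multiplicity (_ :: _) x]/= ?inE.
all: case: (eqVneq x D) => [->|xD]; [|case: (eqVneq x 1) => [->|x1]]; lia.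
Qed.

Lemma admissible_layoff_mid x0 :
  multiplicity d D = 1 -> 1 < x0 < D -> 1 < multiplicity d x0 ->
  exists D', admissible_layoff d D (iota 1 D.-1 ++ [:: x0]) D'.
Proof.
move=> top1 x0_mid x0_dup; have D_pos : 0 < D by lia.
have mult_s x : multiplicity (iota 1 D.-1 ++ [:: x0]) x = (0 < x < D) + (x0 == x).
  rewrite /multiplicity count_cat count_uniq_mem ?iota_uniq //.
  by rewrite mem_iota add1n prednK /= ?addn0.
have mem_s x : (x \in iota 1 D.-1 ++ [:: x0]) = (0 < x < D) || (x == x0).
  by rewrite mem_cat mem_iota inE add1n prednK.
exists (if 1 + (x0 == D.-1) < multiplicity d D.-1 then D.-1 else D.-2); split.
- by rewrite size_cat size_iota /= addn1 prednK.
- move=> x; have := multiplicity_gt0 x; rewrite [multiplicity (_ :: _) x]/= mult_s.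
  by case: (eqVneq x D) => [->|xD]; [|case: (eqVneq x x0) => [->|xx0]]; lia.
- move=> x; have := multiplicity_gt0 x; rewrite [multiplicity (_ :: _) x]/= mult_s mem_s.
  by case: (eqVneq x D) => [->|xD]; [|case: (eqVneq x D.-1) => [->|xDm]]; case: ifP; lia.
- by rewrite mult_s; case: ifP; lia.
Qed.

Lemma exists_admissible_layoff :
  ~~ odd (sumn d) -> 0 < D -> exists k s D', admissible_layoff d k s D'.
Proof.
move=> d_even D_pos; have [top_dup | top_le1] := ltnP 1 (multiplicity d D).
  by have [D' ?] := admissible_layoff_top top_dup; eexists D, _, D'; eassumption.
have top1 : multiplicity d D = 1 by have := multiplicity_gt0 D; lia.
have [/hasP [x0 x0_d x0_dup] | /hasPn no_dup] :=
  boolP (has (fun x => 1 < multiplicity d x) d).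
  have x0_lt : 0 < x0 < D.
    by rewrite d_full in x0_d; case: (eqVneq x0 D) x0_dup => [->|]; lia.
  have [x0_1 | x0_n1] := eqVneq x0 1.
    by rewrite x0_1 in x0_dup; exists 1, [:: D], D.-1; apply: admissible_layoff_leaf.
  have x0_mid : 1 < x0 < D by lia.
  by have [D' ?] := admissible_layoff_mid top1 x0_mid x0_dup; eexists D, _, D'; eassumption.
have d_uniq : uniq d.
  apply: count_mem_uniq => x; case: (boolP (x \in d)) => [xd | /count_memPn //].
  by have := no_dup x xd; rewrite -count_mem_gt0 in xd; rewrite /multiplicity; lia.
have d_sub : {subset d <= iota 1 D} by move=> x; rewrite d_full mem_iota; lia.
have D1 : D = 1.
  have := uniq_leq_size d_uniq d_sub; rewrite size_iota -ltnS.
  by move/(leq_trans d_size); lia.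
have : perm_eq d [:: 1] by apply: uniq_perm => // x; rewrite d_full inE D1; lia.
by move/perm_sumn; move: d_even => /[swap] ->.
Qed.

End AdmissibleLayoffs.

Lemma graphic_full_upto d D :
  full_upto D d -> D.*2 <= (size d).+1 -> ~~ odd (sumn d) -> graphic d.
Proof.
have [n] := ubnP (size d); elim: n d D => // n IH d D.
rewrite ltnS => size_d d_full d_size d_even.
have [D0 | D_pos] := posnP D.
  case: d d_full {size_d d_size d_even} => [_ | x d /(_ x)]; first exact: graphic_nil.
  by rewrite D0 mem_head; lia.
have [k [s [D' [size_s sub_d mem_e size_e]]]] :=
  exists_admissible_layoff d_full d_size d_even D_pos.
have d0 : 0 \notin d by rewrite d_full.
have [e [e_d e_mem e_size e_odd]] := graphic_layoff_sub d0 size_s sub_d.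
apply/e_d/(IH e D').
- by move: size_d; rewrite -e_size; lia.
- by move=> x; rewrite e_mem mem_e.
- by move: size_e; rewrite -e_size /multiplicity; lia.
- by rewrite e_odd.
Qed.

Theorem lemma4 (d : seq nat) :
  full_seq d ->
  (forall x, x \in d -> 1 <= x <= dmax d) ->
  (dmax d).*2 <= size d ->
  graphic d.
Proof.
move=> [d_full d_even] d_range d_size.
apply: (@graphic_full_upto _ (dmax d)) => //; last exact: leqW.
by move=> x; apply/idP/idP => [/d_range | /d_full].
Qed.
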